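(* Let $\phi\cong\bigoplus_{i\in\mathcal I}\phi_i^{\oplus m_i}$ be a semisimple finite-dimensional complex representation of a compact Lie algebra $\mathfrak{g}$, with pairwise inequivalent irreducible $\phi_i$ and multiplicities $m_i$, and let $\mathfrak{h}$ be a Lie subalgebra of $\mathfrak{g}$. Write $\phi|_{\mathfrak{h}}\cong\bigoplus_{j\in\mathcal J}\psi_j^{\oplus n_j}$ and $\phi_i|_{\mathfrak{h}}\cong\bigoplus_{j\in\mathcal J}\psi_j^{\oplus n_{ji}}$ with pairwise inequivalent irreducible representations $\psi_j$ of $\mathfrak{h}$, so that $n_j=\sum_i n_{ji}m_i$. Then: (a) $\|\phi_i|_{\mathfrak{h}}\|_1=1$ for all $i$ with $m_i\ne0$ if and only if $\|\phi|_{\mathfrak{h}}\|_1=\|\phi\|_1$; (b) $\|\phi|_{\mathfrak{h}}\|_2=\|\phi\|_2$ implies $\|\phi|_{\mathfrak{h}}\|_1=\|\phi\|_1$; (c) $\|\phi|_{\mathfrak{h}}\|_2=\|\phi\|_2$ holds if and only if $\|\phi|_{\mathfrak{h}}\|_1=\|\phi\|_1$ and $\phi_i|_{\mathfrak{h}}\not\cong\phi_k|_{\mathfrak{h}}$ for all $i\ne k$ with $m_i\ne0$ and $m_k\ne0$.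
   Context: For a semisimple representation $\psi\cong\bigoplus_i\psi_i^{\oplus m_i}$ (pairwise inequivalent irreducible $\psi_i$), $\|\psi\|_1=\sum_i m_i$ and $\|\psi\|_2=\sum_i m_i^2$. Restrictions of semisimple representations of compact Lie algebras to subalgebras are semisimple. *)

From HB Require Import structures.
From mathcomp Require Import all_boot all_order all_algebra.
From mathcomp Require Import complex.
From mathcomp Require Import reals.
Set Implicit Arguments. Unset Strict Implicit. Unset Printing Implicit Defensive.
Import Order.TTheory GRing.Theory Num.Theory.
Local Open Scope ring_scope.

Section LieDefs.
Variable R : realType.
Local Notation C := (complex R).

Definition is_lie_bracket (V : vectType R) (br : V -> V -> V) : Prop :=
  [/\ (forall a x y z, br (a *: x + y) z = a *: br x z + br y z),
      (forall a x y z, br z (a *: x + y) = a *: br z x + br z y),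
      (forall x, br x x = 0) &
      (forall x y z, br x (br y z) + br y (br z x) + br z (br x y) = 0)].

(* Compact Lie algebra: admits an ad-invariant inner product
   (equivalently, it is the Lie algebra of a compact Lie group). *)
Definition compact_lie (V : vectType R) (br : V -> V -> V) : Prop :=
  is_lie_bracket br /\
  exists B : V -> V -> R,
    [/\ (forall a x y z, B (a *: x + y) z = a * B x z + B y z),
        (forall x y, B x y = B y x),
        (forall x, x != 0 -> 0 < B x x) &
        (forall x y z, B (br x y) z = - B y (br x z))].

Definition lie_subalg (V : vectType R) (br : V -> V -> V) (h : {vspace V}) : Prop :=
  forall x y, x \in h -> y \in h -> br x y \in h.

(* A finite-dimensional complex representation (acting on row vectors). *)
Record rep (V : vectType R) := Rep { rdim : nat; rmap : V -> 'M[C]_rdim }.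

Definition is_rep_on (V : vectType R) (br : V -> V -> V) (S : pred V) (f : rep V) : Prop :=
  [/\ (forall a x y, x \in S -> y \in S ->
          rmap f (a *: x + y) = (a%:C)%C *: rmap f x + rmap f y) &
      (forall x y, x \in S -> y \in S ->
          rmap f (br x y) = rmap f x *m rmap f y - rmap f y *m rmap f x)].

Definition equiv_on (V : vectType R) (S : pred V) (f g : rep V) : Prop :=
  rdim f = rdim g /\
  exists P : 'M[C]_(rdim f, rdim g),
    [/\ row_free P, row_full P &
        forall x, x \in S -> rmap f x *m P = P *m rmap g x].

Definition irr_on (V : vectType R) (S : pred V) (f : rep V) : Prop :=
  (0 < rdim f)%N /\
  forall U : 'M[C]_(rdim f),
    (forall x, x \in S -> stablemx U (rmap f x)) ->
    U = 0 \/ row_full U.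

Definition rep0 (V : vectType R) : rep V := @Rep V 0 (fun _ => 0).
Definition rep_add (V : vectType R) (f g : rep V) : rep V :=
  @Rep V (rdim f + rdim g) (fun x => block_mx (rmap f x) 0 0 (rmap g x)).
Definition rep_sum (V : vectType R) (s : seq (rep V)) : rep V :=
  foldr (@rep_add V) (rep0 V) s.
Definition rep_msum (V : vectType R) (I : finType) (f : I -> rep V) (m : I -> nat)
  : rep V := rep_sum (flatten [seq nseq (m i) (f i) | i <- enum I]).

End LieDefs.

(* ||psi||_1 and ||psi||_2 for a decomposition with multiplicities m. *)
Definition norm1 (I : finType) (m : I -> nat) : nat := (\sum_(i : I) m i)%N.
Definition norm2 (I : finType) (m : I -> nat) : nat := (\sum_(i : I) m i ^ 2)%N.

(* Restricted to h, the summand phi_i becomes the sum of the psi_j with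
   multiplicities given by the i-th column of the branching matrix (n_ji);
   since phi_i <> 0 its column sum c_i is at least 1.  Hence
   ||phi|_h||_1 = sum_i m_i c_i >= sum_i m_i, with equality iff c_i = 1 on the
   support of m, i.e. iff every phi_i|_h is irreducible.  Expanding
   ||phi|_h||_2 = sum_(i,k) m_i m_k <col_i, col_k> and using
   <col_i, col_i> >= c_i >= 1 shows that ||phi|_h||_2 = ||phi||_2 forces unit
   columns on the support and pairwise orthogonal columns; two unit columns are
   orthogonal iff they select different psi_j, i.e. iff the restrictions of
   phi_i and phi_k are inequivalent. *)

From HB Require Import structures.
From mathcomp Require Import all_boot all_order all_algebra.
From mathcomp Require Import complex.
From mathcomp Require Import reals.
From mathcomp Require Import zify ring.
Set Implicit Arguments. Unset Strict Implicit. Unset Printing Implicit Defensive.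
Import Order.TTheory GRing.Theory Num.Theory.

Lemma sum_nat_eq1_indicator (J : finType) (f : J -> nat) :
  \sum_l f l = 1 <-> exists j, forall l, f l = (l == j).
Proof.
split=> [/eqP/sum_nat_eq1 [j [_ fj1 fj0]] | [j fj]].
  by exists j => l; case: eqVneq => [-> // | /fj0 -> //].
by rewrite (bigD1 j) //= fj eqxx big1 // => l /negbTE; rewrite fj => ->.
Qed.

Lemma sum_indicator_mul (J : finType) (f g : J -> nat) (j j' : J) :
  (forall l, f l = (l == j)) -> (forall l, g l = (l == j')) ->
  \sum_l f l * g l = (j == j').
Proof.
move=> fj gj'; rewrite (bigD1 j) //= big1 ?addn0 => [|l /negbTE ljF].
  by rewrite fj gj' eqxx mul1n.
by rewrite fj ljF.
Qed.

Lemma eq_sum_leqP (I : finType) (f g : I -> nat) :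
  (forall i, f i <= g i) ->
  reflect (forall i, f i = g i) (\sum_i f i == \sum_i g i).
Proof.
move=> fg; rewrite (leqif_sum (fun i _ => leqif_eq (fg i))).2.
by apply: (iffP forall_inP) => [H i | H i _]; apply/eqP; rewrite ?H.
Qed.

Section Branching.
Variables (I J : finType) (m : I -> nat) (nn : J -> I -> nat) (n : J -> nat).
Hypothesis n_branch : forall j, n j = \sum_i nn j i * m i.

Lemma norm1_branch : norm1 n = \sum_i m i * \sum_j nn j i.
Proof.
rewrite /norm1 (eq_bigr _ (fun j _ => n_branch j)) exchange_big /=.
by apply: eq_bigr => i _; rewrite -big_distrl /= mulnC.
Qed.

Lemma norm2_branch :
  norm2 n = \sum_i m i ^ 2 * \sum_j nn j i * nn j i
          + \sum_i \sum_(k | k != i) m i * m k * \sum_j nn j i * nn j k.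
Proof.
rewrite /norm2.
under eq_bigr => j _ do rewrite n_branch -mulnn big_distrl /=.
under eq_bigr => j _ do under eq_bigr => i _ do rewrite big_distrr /=.
rewrite exchange_big -big_split /=; apply: eq_bigr => i _.
rewrite exchange_big (bigD1 i) //=; congr (_ + _).
  by rewrite big_distrr; apply: eq_bigr => j _ /=; ring.
by apply: eq_bigr => k _; rewrite big_distrr; apply: eq_bigr => j _ /=; ring.
Qed.

Lemma colsum_le_coldot i : \sum_j nn j i <= \sum_j nn j i * nn j i.
Proof. by apply: leq_sum => j _; case: (nn j i) => // k; rewrite leq_pmulr. Qed.

Hypothesis colsum_gt0 : forall i, 0 < \sum_j nn j i.

Lemma leq_sqr_coldot i : m i ^ 2 <= m i ^ 2 * \sum_j nn j i * nn j i.
Proof. by rewrite leq_pmulr // (leq_trans (colsum_gt0 i)) ?colsum_le_coldot. Qed.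

Lemma norm1_branch_eq :
  norm1 n = norm1 m <-> forall i, m i != 0 -> \sum_j nn j i = 1.
Proof.
have le_i i : m i <= m i * \sum_j nn j i by rewrite leq_pmulr.
rewrite norm1_branch /norm1; split=> [E | E].
  move: E => /esym/eqP/(eq_sum_leqP le_i) E i mi.
  by apply/eqP; rewrite -(eqn_pmul2l (m := m i)) ?lt0n ?muln1 // -E.
apply/esym/eqP/(eq_sum_leqP le_i) => i.
by case: (eqVneq (m i) 0) => [-> // | /E ->]; rewrite muln1.
Qed.

Lemma norm2_branch_diag_eq :
  \sum_i m i ^ 2 = \sum_i m i ^ 2 * \sum_j nn j i * nn j i <->
  forall i, m i != 0 -> \sum_j nn j i = 1.
Proof.
split=> [/eqP/(eq_sum_leqP leq_sqr_coldot) E i mi | E].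
  have coldot1 : \sum_j nn j i * nn j i = 1.
    apply/eqP; rewrite -(eqn_pmul2l (m := m i ^ 2)) -?E; first by rewrite muln1.
    by rewrite expn_gt0 lt0n mi.
  by have := colsum_le_coldot i; have := colsum_gt0 i; lia.
apply/eqP/(eq_sum_leqP leq_sqr_coldot) => i.
case: (eqVneq (m i) 0) => [-> // | /E /sum_nat_eq1_indicator [j col_j]].
by rewrite (sum_indicator_mul col_j col_j) eqxx muln1.
Qed.

Lemma offdiag_eq0 :
  \sum_i \sum_(k | k != i) m i * m k * \sum_j nn j i * nn j k = 0 <->
  forall i k, i != k -> m i != 0 -> m k != 0 -> \sum_j nn j i * nn j k = 0.
Proof.
split=> [/eqP | E].
  rewrite sum_nat_eq0 => /forall_inP E i k ik mi mk.
  move: (E i isT); rewrite sum_nat_eq0 => /forall_inP/(_ k).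
  by rewrite eq_sym ik !muln_eq0 (negbTE mi) (negbTE mk) => /(_ isT)/eqP.
apply: big1 => i _; apply: big1 => k ki.
case: (eqVneq (m i) 0) => [-> // | mi]; case: (eqVneq (m k) 0) => [-> | mk].
  by rewrite muln0.
by rewrite E ?muln0 // eq_sym.
Qed.

Lemma norm2_branch_eq :
  norm2 n = norm2 m <->
  (forall i, m i != 0 -> \sum_j nn j i = 1) /\
  (forall i k, i != k -> m i != 0 -> m k != 0 -> \sum_j nn j i * nn j k = 0).
Proof.
rewrite norm2_branch -norm2_branch_diag_eq -offdiag_eq0 /norm2.
have : \sum_i m i ^ 2 <= \sum_i m i ^ 2 * \sum_j nn j i * nn j i.
  by apply: leq_sum => i _; apply: leq_sqr_coldot.
lia.
Qed.

End Branching.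

Section RepEquivalence.
Variables (R : realType) (V : vectType R).
Implicit Types (S : pred V) (f g k : rep V).
Local Open Scope ring_scope.

Lemma equiv_on_sym S f g : equiv_on S f g -> equiv_on S g f.
Proof.
case=> dimE [P [/row_freeP [K PK] /row_fullP [B BP] fPg]]; split=> //.
have BK : B = K by rewrite -[B]mulmx1 -PK mulmxA BP mul1mx.
subst B; exists K; split; [by apply/row_freeP; exists P | by apply/row_fullP; exists P |].
move=> x Sx; have E : K *m rmap f x *m (P *m K) = K *m rmap f x by rewrite PK mulmx1.
by rewrite -E mulmxA -(mulmxA K (rmap f x) P) fPg // mulmxA BP mul1mx.
Qed.

Lemma equiv_on_trans S f g k : equiv_on S f g -> equiv_on S g k -> equiv_on S f k.
Proof.
case=> dim_fg [P [/row_freeP [K1 PK1] /row_fullP [B1 BP1] fPg]].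
case=> dim_gk [Q [/row_freeP [K2 QK2] /row_fullP [B2 BQ2] gQk]].
split; first by rewrite dim_fg.
exists (P *m Q); split.
- by apply/row_freeP; exists (K2 *m K1); rewrite mulmxA -(mulmxA P) QK2 mulmx1 PK1.
- by apply/row_fullP; exists (B2 *m B1); rewrite mulmxA -(mulmxA B2) BP1 mulmx1 BQ2.
- by move=> x Sx; rewrite mulmxA fPg // -mulmxA gQk // mulmxA.
Qed.

Lemma equiv_on_add0r S f : equiv_on S f (rep_add f (rep0 V)).
Proof.
split; first by rewrite /= addn0.
exists (row_mx 1%:M 0); split.
- by apply/row_freeP; exists (col_mx 1%:M 0); rewrite mul_row_col mulmx1 mulmx0 addr0.
- apply/row_fullP; exists (col_mx 1%:M 0).
  rewrite mul_col_row mulmx1 mul0mx [RHS]scalar_mx_block ?mulmx0.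
  by congr block_mx; apply/matrixP => [[]].
- move=> x Sx /=.
  by rewrite mul_mx_row mulmx1 ?mulmx0 mul_row_block ?mul1mx ?mul0mx ?mulmx0 ?addr0 ?add0r.
Qed.

Section MultiplicitySum.
Variables (J : finType) (psis : J -> rep V).

Lemma rdim_rep_msum (k : J -> nat) :
  rdim (rep_msum psis k) = (\sum_j k j * rdim (psis j))%N.
Proof.
have rdim_sum s : rdim (rep_sum s) = (\sum_(x <- s) rdim x)%N.
  by elim: s => [|x s IH]; rewrite ?big_nil ?big_cons //= IH.
rewrite /rep_msum rdim_sum big_flatten big_map big_enum /=.
by apply: eq_bigr => j _; rewrite big_nseq iter_addn_0 mulnC.
Qed.

Lemma rep_msum_indicator (k : J -> nat) j :
  (forall l, k l = (l == j)) -> rep_msum psis k = rep_add (psis j) (rep0 V).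
Proof.
move=> kj.
have flat s : flatten [seq nseq (k l) (psis l) | l <- s]
            = [seq psis l | l <- filter (pred1 j) s].
  by elim: s => //= l s ->; rewrite kj; case: (l == j).
by rewrite /rep_msum flat filter_pred1_uniq ?enum_uniq ?mem_enum.
Qed.

Lemma msum_mult_gt0 S f (k : J -> nat) :
  (0 < rdim f)%N -> equiv_on S f (rep_msum psis k) -> (0 < \sum_j k j)%N.
Proof.
move=> dim_gt0 [dimE _]; move: dim_gt0; rewrite dimE rdim_rep_msum !lt0n.
apply: contra; rewrite !sum_nat_eq0 => /forall_inP k0.
by apply/forall_inP => j _; rewrite (eqP (k0 j isT)).
Qed.

Lemma equiv_on_msum_indicator S (k : J -> nat) j :
  (forall l, k l = (l == j)) -> equiv_on S (rep_msum psis k) (psis j).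
Proof. by move=> kj; rewrite (rep_msum_indicator kj); apply/equiv_on_sym/equiv_on_add0r. Qed.

Lemma not_equiv_on_msum1 S f g (k1 k2 : J -> nat) :
  (forall j l, j != l -> ~ equiv_on S (psis j) (psis l)) ->
  equiv_on S f (rep_msum psis k1) -> equiv_on S g (rep_msum psis k2) ->
  (\sum_j k1 j = 1)%N -> (\sum_j k2 j = 1)%N ->
  ~ equiv_on S f g <-> (\sum_j k1 j * k2 j = 0)%N.
Proof.
move=> psis_inequiv fE gE /sum_nat_eq1_indicator [j k1j] /sum_nat_eq1_indicator [j' k2j'].
have f_j := equiv_on_trans fE (equiv_on_msum_indicator S k1j).
have g_j' := equiv_on_trans gE (equiv_on_msum_indicator S k2j').
rewrite (sum_indicator_mul k1j k2j'); split.
  case: eqVneq => [jj' fg | //]; case: fg; subst j'.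
  exact: equiv_on_trans f_j (equiv_on_sym g_j').
case: eqVneq => // jj' _ fg; apply: (psis_inequiv _ _ jj').
exact: equiv_on_trans (equiv_on_sym f_j) (equiv_on_trans fg g_j').
Qed.

End MultiplicitySum.
End RepEquivalence.

Theorem proposition2
  (R : realType) (V : vectType R) (br : V -> V -> V)
  (Hg : compact_lie br)
  (h : {vspace V}) (Hh : lie_subalg br h)
  (* the representation phi of g and its decomposition *)
  (phi : rep V) (Hphi : is_rep_on br predT phi)
  (I : finType) (phis : I -> rep V) (m : I -> nat)
  (Hphis : forall i, is_rep_on br predT (phis i))
  (Hirr : forall i, irr_on predT (phis i))
  (Hineq : forall i k, i != k -> ~ equiv_on predT (phis i) (phis k))
  (Hdec : equiv_on predT phi (rep_msum phis m))
  (* the decompositions of the restrictions to h *)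
  (J : finType) (psis : J -> rep V) (n : J -> nat) (nn : J -> I -> nat)
  (Hpsis : forall j, is_rep_on br (mem h) (psis j))
  (Hirr_h : forall j, irr_on (mem h) (psis j))
  (Hineq_h : forall j l, j != l -> ~ equiv_on (mem h) (psis j) (psis l))
  (Hdec_h : equiv_on (mem h) phi (rep_msum psis n))
  (Hdec_hi : forall i, equiv_on (mem h) (phis i) (rep_msum psis (nn ^~ i)))
  (Hn : forall j, n j = (\sum_(i : I) nn j i * m i)%N) :
  [/\ (forall i, m i != 0%N -> norm1 (nn ^~ i) = 1%N) <-> norm1 n = norm1 m,
      norm2 n = norm2 m -> norm1 n = norm1 m &
      norm2 n = norm2 m <->
        (norm1 n = norm1 m /\
         forall i k, i != k -> m i != 0%N -> m k != 0%N ->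
           ~ equiv_on (mem h) (phis i) (phis k))].
Proof.
have colsum_gt0 i : 0 < \sum_j nn j i.
  exact: msum_mult_gt0 (Hirr i).1 (Hdec_hi i).
have norm1E := norm1_branch_eq Hn colsum_gt0.
have norm2E := norm2_branch_eq Hn colsum_gt0.
have inequivE i k : m i != 0 -> m k != 0 -> norm1 n = norm1 m ->
    ~ equiv_on (mem h) (phis i) (phis k) <-> \sum_j nn j i * nn j k = 0.
  move=> mi mk /norm1E col1.
  exact: not_equiv_on_msum1 Hineq_h (Hdec_hi i) (Hdec_hi k) (col1 i mi) (col1 k mk).
split=> [| /norm2E [/norm1E ? _] // |]; first by apply: iff_sym.
split=> [/norm2E [/norm1E norm1_eq orth] | [norm1_eq inequiv]].
  by split=> // i k ik mi mk; apply/(inequivE i k mi mk norm1_eq)/orth.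
apply/norm2E; split=> [|i k ik mi mk]; first exact/norm1E.
exact/(inequivE i k mi mk norm1_eq)/inequiv.
Qed.
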